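(* Consider the repeated single-slot hybrid auction in which at each step $t$ each advertiser $j$ bids $(m_{jt},c_{jt})$, the auctioneer's index is $q_{jt}>0$, the effective bid is $R_{jt}=\max(m_{jt},c_{jt}q_{jt})$, the highest effective bid wins and pays (with $R_{-j}$ the highest competing effective bid) $R_{-j}$ per impression if $m_{jt}>c_{jt}q_{jt}$ and $R_{-j}/q_{jt}$ per click otherwise. Advertiser $j$ has per-click value $v_j$ and is certain of its click-through rate $p_j>0$ (its prior is the point mass at $p_j$). The bidding index strategy (with advertiser discount factor $\gamma_b\in[0,1)$) bids at each step $(B_{jt},B_{jt}/p_j)$, where $B_{jt}=\mathcal{W}_{jt}\min(1,p_j/q_{jt})$ and $\mathcal{W}_{jt}$ is the largest $W$ such that the following game has positive optimal expected $\gamma_b$-discounted value: starting at step $t$, at each step $s\ge t$ the advertiser may stop or continue, and if it continues it gains $v_jp_j-W\min(1,p_j/q_{js})$. Then: (1) if $q_{jt}\le p_j$ for all $t$, the bidding index strategy reduces to bidding $(v_jp_j,v_j)$; this is equivalent to bidding $(v_jp_j,0)$ and is socially optimal (i.e. the impression goes to an advertiser with the largest $v_jp_j$); (2) if $q_{jt}\ge p_j$ for all $t$ and $q_{jt}$ is monotonically decreasing in $t$, the bidding index strategy reduces to bidding $(v_jp_j,v_j)$.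
   Context: ''Equivalent'' bids are bids yielding the same effective bid and the same pricing. *)

From Stdlib Require Import Reals Lra.
From Coquelicot Require Import Coquelicot.
Open Scope R_scope.

(** A bid is a pair (m, c): per-impression bid m, per-click bid c. *)
Definition bid := (R * R)%type.

Definition eff_bid (q : R) (b : bid) : R := Rmax (fst b) (snd b * q).

Inductive pricing := PerImpression (price : R) | PerClick (price : R).

Definition price_rule (q : R) (b : bid) (Rm : R) : pricing :=
  if Rlt_dec (snd b * q) (fst b) then PerImpression Rm else PerClick (Rm / q).

(** Expected charge for one impression of an advertiser with click-through
    rate p (per-click prices are paid with probability p). *)
Definition expected_charge (p : R) (pr : pricing) : R :=
  match pr with PerImpression r => r | PerClick r => p * r end.

Definition equivalent_bids (p q : R) (b1 b2 : bid) : Prop :=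
  eff_bid q b1 = eff_bid q b2 /\
  forall Rm : R, expected_charge p (price_rule q b1 Rm)
               = expected_charge p (price_rule q b2 Rm).

Definition gain (v p W : R) (q : nat -> R) (s : nat) : R :=
  v * p - W * Rmin 1 (p / q s).

Fixpoint psum (f : nat -> R) (N : nat) : R :=
  match N with O => 0 | S n => psum f n + f n end.

(** Deterministic stopping policies (the game is deterministic since the
    prior is a point mass): [Some N] = continue for N steps t,...,t+N-1 then
    stop; [None] = never stop. *)
Definition policy_value (g : nat -> R) (gam : R) (t : nat) (pol : option nat) : R :=
  match pol with
  | Some N => psum (fun k => gam ^ k * g (t + k)%nat) N
  | None => Series (fun k => gam ^ k * g (t + k)%nat)
  end.

Definition optimal_value_positive (v p : R) (q : nat -> R) (gam : R) (t : nat) (W : R) : Prop :=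
  Rbar_lt 0 (Lub_Rbar (fun x => exists pol, x = policy_value (gain v p W q) gam t pol)).

Definition index_W (v p : R) (q : nat -> R) (gam : R) (t : nat) : R :=
  real (Lub_Rbar (fun W => optimal_value_positive v p q gam t W)).

Definition index_B (v p : R) (q : nat -> R) (gam : R) (t : nat) : R :=
  index_W v p q gam t * Rmin 1 (p / q t).

Definition index_bid (v p : R) (q : nat -> R) (gam : R) (t : nat) : bid :=
  (index_B v p q gam t, index_B v p q gam t / p).

(* Write c_s = min(1, p/q_s).  If c_t > 0 is the least of the c_s, s >= t, then
   every step of the stopping game has gain at most v p - W c_t, so the game has
   positive value exactly when W < v p / c_t: stopping after one step already
   gains v p - W c_t > 0, and otherwise every policy gains at most 0.  Hence
   W_t = v p / c_t and B_t = v p.  Under (1) all c_s equal 1; under (2)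
   c_s = p/q_s is nondecreasing in s. *)

From Stdlib Require Import Reals Lra.
From Coquelicot Require Import Coquelicot.
Open Scope R_scope.

Lemma sum_n_nonpos (a : nat -> R) :
  (forall k, a k <= 0) -> forall n, sum_n a n <= 0.
Proof.
  intros Ha n; induction n as [|n IH].
  - rewrite sum_O; apply Ha.
  - rewrite sum_Sn; unfold plus; simpl. specialize (Ha (S n)). lra.
Qed.

Lemma policy_value_nonpos (g : nat -> R) (gam : R) (t : nat) :
  0 <= gam -> (forall k, g (t + k)%nat <= 0) ->
  forall pol, policy_value g gam t pol <= 0.
Proof.
  intros Hgam Hg.
  assert (Hterm : forall k, gam ^ k * g (t + k)%nat <= 0).
  { intros k. assert (Hpow := pow_le gam k Hgam). specialize (Hg k). nra. }
  intros [N|]; simpl.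
  - induction N as [|N IH]; simpl; [lra|]. specialize (Hterm N). lra.
  - unfold Series.
    assert (Hlim : Rbar_le (Lim_seq (sum_n (fun k => gam ^ k * g (t + k)%nat))) 0).
    { rewrite <- (Lim_seq_const 0). apply Lim_seq_le_loc. exists O.
      intros n _. now apply sum_n_nonpos. }
    destruct (Lim_seq _); simpl in *; lra.
Qed.

Lemma Lub_Rbar_lt (a : R) : Lub_Rbar (fun x => x < a) = Finite a.
Proof.
  apply is_lub_Rbar_unique. split.
  - intros x Hx. simpl. lra.
  - intros [b| |] Hb; simpl; auto.
    + destruct (Rle_or_lt a b) as [|Hba]; auto.
      specialize (Hb ((b + a) / 2) ltac:(lra)). simpl in Hb. lra.
    + exact (Hb (a - 1) ltac:(lra)).
Qed.

Section MinimalCurrentRatio.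

Variables (v p : R) (q : nat -> R) (gam : R) (t : nat).
Hypotheses (Hgam : 0 <= gam) (Hv : 0 <= v) (Hp : 0 < p).
Hypothesis Hratio_pos : 0 < Rmin 1 (p / q t).
Hypothesis Hratio_min : forall k, Rmin 1 (p / q t) <= Rmin 1 (p / q (t + k)%nat).

Lemma optimal_value_positive_iff (W : R) :
  optimal_value_positive v p q gam t W <-> W < v * p / Rmin 1 (p / q t).
Proof.
  set (c := Rmin 1 (p / q t)) in *.
  assert (Hc : v * p / c * c = v * p) by (field; lra).
  unfold optimal_value_positive.
  destruct (Lub_Rbar_correct
              (fun x => exists pol, x = policy_value (gain v p W q) gam t pol))
    as [Hub Hlub].
  split.
  - intros Hpos. destruct (Rlt_or_le W (v * p / c)) as [|Hge]; [assumption|exfalso].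
    assert (HWc : v * p <= W * c) by nra.
    assert (HW : 0 <= W) by nra.
    assert (Hle : Rbar_le (Lub_Rbar (fun x => exists pol,
                    x = policy_value (gain v p W q) gam t pol)) 0).
    { apply Hlub. intros x [pol ->]. simpl. apply policy_value_nonpos; auto.
      intros k. unfold gain. specialize (Hratio_min k). nra. }
    destruct (Lub_Rbar _); simpl in *; lra.
  - intros HW.
    assert (Hone_step : policy_value (gain v p W q) gam t (Some 1%nat)
                        = v * p - W * c).
    { simpl. rewrite Nat.add_0_r. unfold gain, c. ring. }
    assert (Hgain : 0 < v * p - W * c).
    { apply (Rmult_lt_compat_r c) in HW; lra. }
    specialize (Hub _ (ex_intro _ (Some 1%nat) (eq_sym Hone_step))).
    destruct (Lub_Rbar _); simpl in *; lra.
Qed.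

Lemma index_B_eq : index_B v p q gam t = v * p.
Proof.
  unfold index_B, index_W.
  rewrite (Lub_Rbar_eqset _ (fun W => W < v * p / Rmin 1 (p / q t)))
    by exact optimal_value_positive_iff.
  rewrite Lub_Rbar_lt. simpl. field. lra.
Qed.

Lemma index_bid_eq : index_bid v p q gam t = (v * p, v).
Proof.
  unfold index_bid. rewrite index_B_eq. f_equal. field. lra.
Qed.

End MinimalCurrentRatio.

Lemma Rmin_1_div_le (p x : R) : 0 < x -> x <= p -> Rmin 1 (p / x) = 1.
Proof.
  intros Hx Hxp. apply Rmin_left.
  apply (Rmult_le_reg_r x); [lra|]. unfold Rdiv. rewrite Rmult_assoc, Rinv_l; lra.
Qed.

Lemma Rmin_1_div_ge (p x : R) : 0 < x -> p <= x -> Rmin 1 (p / x) = p / x.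
Proof.
  intros Hx Hpx. apply Rmin_right.
  apply (Rmult_le_reg_r x); [lra|]. unfold Rdiv. rewrite Rmult_assoc, Rinv_l; lra.
Qed.

Lemma nonincreasing_le_shift (q : nat -> R) :
  (forall s, q (S s) <= q s) -> forall t k, q (t + k)%nat <= q t.
Proof.
  intros Hq t k. induction k as [|k IH].
  - rewrite Nat.add_0_r; lra.
  - rewrite Nat.add_succ_r. specialize (Hq (t + k)%nat). lra.
Qed.

Lemma index_bid_low_index (v p : R) (q : nat -> R) (gam : R) (t : nat) :
  0 <= gam -> 0 <= v -> 0 < p -> (forall s, 0 < q s /\ q s <= p) ->
  index_bid v p q gam t = (v * p, v).
Proof.
  intros Hgam Hv Hp Hq.
  apply index_bid_eq; auto.
  - rewrite Rmin_1_div_le by apply Hq. lra.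
  - intros k. rewrite !Rmin_1_div_le by apply Hq. lra.
Qed.

Lemma index_bid_decreasing_index (v p : R) (q : nat -> R) (gam : R) (t : nat) :
  0 <= gam -> 0 <= v -> 0 < p -> (forall s, 0 < q s /\ p <= q s) ->
  (forall s, q (S s) <= q s) ->
  index_bid v p q gam t = (v * p, v).
Proof.
  intros Hgam Hv Hp Hq Hdec.
  destruct (Hq t) as [Hqt _].
  apply index_bid_eq; auto.
  - rewrite Rmin_1_div_ge by apply Hq. apply Rdiv_lt_0_compat; lra.
  - intros k. destruct (Hq (t + k)%nat) as [Hqtk _].
    rewrite !Rmin_1_div_ge by apply Hq.
    apply Rmult_le_compat_l; [lra|].
    apply Rinv_le_contravar; [lra|]. now apply nonincreasing_le_shift.
Qed.

Lemma eff_bid_value_bid (v p x : R) :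
  0 <= v -> 0 < x -> x <= p -> eff_bid x (v * p, v) = v * p.
Proof.
  intros Hv Hx Hxp. unfold eff_bid; simpl. apply Rmax_left. nra.
Qed.

Lemma equivalent_bids_drop_click_bid (v p x : R) :
  0 <= v -> 0 < x -> x <= p -> equivalent_bids p x (v * p, v) (v * p, 0).
Proof.
  intros Hv Hx Hxp. split.
  - rewrite eff_bid_value_bid by assumption.
    unfold eff_bid; simpl. rewrite Rmax_left; nra.
  - intros Rm. unfold price_rule; simpl.
    destruct (Rlt_dec (v * x) (v * p)) as [H1|H1];
      destruct (Rlt_dec (0 * x) (v * p)) as [H2|H2]; simpl; try reflexivity.
    + exfalso. nra.
    + (* v > 0 and x = p: per click at R/x with CTR p is a charge of R *)
      assert (Hxp_eq : x = p) by nra.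
      subst x. field. lra.
Qed.

Theorem theorem6 :
  (forall (n : nat) (v p : nat -> R) (q : nat -> nat -> R) (gam : R),
     0 <= gam < 1 ->
     (forall k, (k < n)%nat -> 0 < p k /\ 0 <= v k /\
        forall t, 0 < q k t /\ q k t <= p k) ->
     forall t : nat,
       (forall k, (k < n)%nat ->
          index_bid (v k) (p k) (q k) gam t = (v k * p k, v k) /\
          equivalent_bids (p k) (q k t) (v k * p k, v k) (v k * p k, 0)) /\
       (forall i, (i < n)%nat ->
          (forall k, (k < n)%nat ->
             eff_bid (q k t) (index_bid (v k) (p k) (q k) gam t)
             <= eff_bid (q i t) (index_bid (v i) (p i) (q i) gam t)) ->
          forall k, (k < n)%nat -> v k * p k <= v i * p i)) /\
  (forall (v p : R) (q : nat -> R) (gam : R),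
     0 <= gam < 1 -> 0 < p -> 0 <= v ->
     (forall t, 0 < q t /\ p <= q t) ->
     (forall t, q (S t) <= q t) ->
     forall t, index_bid v p q gam t = (v * p, v)).
Proof.
  split.
  - intros n v p q gam Hgam Hadv t.
    assert (Hbid : forall k, (k < n)%nat ->
              index_bid (v k) (p k) (q k) gam t = (v k * p k, v k)).
    { intros k Hk. destruct (Hadv k Hk) as [Hp [Hv Hq]].
      apply index_bid_low_index; auto; lra. }
    assert (Heff : forall k, (k < n)%nat ->
              eff_bid (q k t) (index_bid (v k) (p k) (q k) gam t) = v k * p k).
    { intros k Hk. rewrite Hbid by exact Hk.
      destruct (Hadv k Hk) as [_ [Hv Hq]].
      apply eff_bid_value_bid; apply Hq || exact Hv. }
    split.
    + intros k Hk. split; [now apply Hbid|].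
      destruct (Hadv k Hk) as [_ [Hv Hq]].
      apply equivalent_bids_drop_click_bid; apply Hq || exact Hv.
    + intros i Hi Hwin k Hk. specialize (Hwin k Hk).
      now rewrite (Heff k Hk), (Heff i Hi) in Hwin.
  - intros v p q gam Hgam Hp Hv Hq Hdec t.
    apply index_bid_decreasing_index; auto; lra.
Qed.
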